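(* Let $\mathcal C$ be a two-sided quaternionic Hilbert space whose inner product satisfies $\langle c,qd\rangle_{\mathcal C}=\langle \overline{q}c,d\rangle_{\mathcal C}$ for all $c,d\in\mathcal C$ and $q\in\mathbb H$. Let $0<r<r_0<1$ and $R=1/r$, and let $\Phi(p)=\sum_{u=0}^\infty p^u\Phi_u$ ($\Phi_u\in\mathbf L(\mathcal C,\mathcal C)$) be an $\mathbf L(\mathcal C,\mathcal C)$-valued left slice hyperholomorphic function in the ball $\mathbb B_{r_0}=\{p\in\mathbb H:|p|<r_0\}$, continuous on $\{|p|\le r_0\}$ in the operator topology. For $\mathbf f=(f_v)_{v\ge1}$ and $\mathbf g=(g_u)_{u\ge1}$ in $\ell_{2,r}(\mathbb N,\mathcal C)$ define \[ [\mathbf f,\mathbf g]_\Phi=\sum_{v=1}^\infty\sum_{u=1}^v \langle \Phi_{v-u}f_v,g_u\rangle_{\mathcal C}+\sum_{u=1}^\infty\sum_{v=1}^u \langle \Phi^*_{u-v}f_v,g_u\rangle_{\mathcal C}. \] Then the form $[\cdot,\cdot]_\Phi$ is jointly continuous on $\ell_{2,r}(\mathbb N,\mathcal C)\times \ell_{2,r}(\mathbb N,\mathcal C)$.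
   Context: $\mathbb H$ denotes the real quaternions. $\ell_{2,r}(\mathbb N,\mathcal C)$ is the space of sequences $\mathbf f=(f_1,f_2,\ldots)$ with $f_u\in\mathcal C$ and $\sum_{u=1}^\infty R^{2u}\|f_u\|_{\mathcal C}^2<\infty$, with norm $\|\mathbf f\|^2=\sum_{u\ge1}R^{2u}\|f_u\|^2_{\mathcal C}$. A function $f$ on an axially symmetric open set $\Omega\subset\mathbb H$ with values in a two-sided quaternionic Banach space is left slice hyperholomorphic if $f(x+Iy)=\alpha(x,y)+I\beta(x,y)$ for all $I$ in the unit sphere $\mathbb S$ of purely imaginary quaternions, where $\alpha,\beta$ are real differentiable, satisfy $\partial_x\alpha-\partial_y\beta=0$, $\partial_y\alpha+\partial_x\beta=0$, and $\alpha(x,-y)=\alpha(x,y)$, $\beta(x,-y)=-\beta(x,y)$; on a ball centered at $0$ this is equivalent to having a convergent expansion $\sum_u p^u\Phi_u$. *)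

From HB Require Import structures.
From mathcomp Require Import all_boot all_order all_algebra.
From mathcomp Require Import all_classical all_reals all_analysis.
Set Implicit Arguments. Unset Strict Implicit. Unset Printing Implicit Defensive.
Import Order.TTheory GRing.Theory Num.Theory.
Import numFieldNormedType.Exports.
Local Open Scope ring_scope.

(** * Real quaternions, represented as row vectors (a0, a1, a2, a3)
    meaning a0 + a1 i + a2 j + a3 k; addition is the vector addition. *)
Notation quat R := ('rV[R]_4).

Section Quaternions.
Variable R : realType.

Definition qc (q : quat R) (k : nat) : R := q ord0 (inord k).
Definition mkq (a b c d : R) : quat R := \row_(j < 4) nth 0 [:: a; b; c; d] j.
Definition qreal (x : R) : quat R := mkq x 0 0 0.
Definition qone : quat R := qreal 1.
Definition qmul (p q : quat R) : quat R :=
  mkq (qc p 0 * qc q 0 - qc p 1 * qc q 1 - qc p 2 * qc q 2 - qc p 3 * qc q 3)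
      (qc p 0 * qc q 1 + qc p 1 * qc q 0 + qc p 2 * qc q 3 - qc p 3 * qc q 2)
      (qc p 0 * qc q 2 - qc p 1 * qc q 3 + qc p 2 * qc q 0 + qc p 3 * qc q 1)
      (qc p 0 * qc q 3 + qc p 1 * qc q 2 - qc p 2 * qc q 1 + qc p 3 * qc q 0).
Definition qconj (q : quat R) : quat R := mkq (qc q 0) (- qc q 1) (- qc q 2) (- qc q 3).
Definition qabs (q : quat R) : R :=
  Num.sqrt (qc q 0 ^+ 2 + qc q 1 ^+ 2 + qc q 2 ^+ 2 + qc q 3 ^+ 2).
Fixpoint qpow (p : quat R) (n : nat) : quat R :=
  if n is m.+1 then qmul p (qpow p m) else qone.
End Quaternions.

(** Inner product convention: right linear in the first argument,
    <c p, d> = <c, d> p, hermitian <d, c> = conj <c, d>,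
    hence <c, d q> = conj q <c, d>; positive definite; complete. *)
Record qhilbert (R : realType) := QHilbert {
  qh_car :> zmodType;
  qh_lact : quat R -> qh_car -> qh_car;
  qh_ract : qh_car -> quat R -> qh_car;
  qh_ip : qh_car -> qh_car -> quat R;
  qh_lactDr : forall q c d, qh_lact q (c + d) = qh_lact q c + qh_lact q d;
  qh_lactDl : forall p q c, qh_lact (p + q) c = qh_lact p c + qh_lact q c;
  qh_lactM : forall p q c, qh_lact (qmul p q) c = qh_lact p (qh_lact q c);
  qh_lact1 : forall c, qh_lact (qone R) c = c;
  qh_ractDl : forall q c d, qh_ract (c + d) q = qh_ract c q + qh_ract d q;
  qh_ractDr : forall p q c, qh_ract c (p + q) = qh_ract c p + qh_ract c q;
  qh_ractM : forall p q c, qh_ract c (qmul p q) = qh_ract (qh_ract c p) q;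
  qh_ract1 : forall c, qh_ract c (qone R) = c;
  qh_lract : forall p q c, qh_ract (qh_lact p c) q = qh_lact p (qh_ract c q);
  qh_real_central : forall (x : R) c, qh_lact (qreal x) c = qh_ract c (qreal x);
  qh_ipDl : forall c c' d, qh_ip (c + c') d = qh_ip c d + qh_ip c' d;
  qh_ipZl : forall c d p, qh_ip (qh_ract c p) d = qmul (qh_ip c d) p;
  qh_ip_herm : forall c d, qh_ip d c = qconj (qh_ip c d);
  qh_ip_real : forall c, qh_ip c c = qreal (qc (qh_ip c c) 0);
  qh_ip_pos : forall c, c != 0 -> 0 < qc (qh_ip c c) 0;
  qh_complete : forall s : nat -> qh_car,
    (forall e : R, 0 < e -> exists N : nat, forall m n : nat, (N <= m)%N -> (N <= n)%N ->
       Num.sqrt (qc (qh_ip (s m - s n) (s m - s n)) 0) < e) ->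
    exists l : qh_car, forall e : R, 0 < e -> exists N : nat, forall n : nat, (N <= n)%N ->
       Num.sqrt (qc (qh_ip (s n - l) (s n - l)) 0) < e
}.

Section QHilbertDefs.
Variables (R : realType) (C : qhilbert R).

Definition qhnorm (c : C) : R := Num.sqrt (qc (qh_ip c c) 0).

Definition is_qop (A : C -> C) : Prop :=
  (forall (c d : C) (p : quat R), A (qh_ract c p + d) = qh_ract (A c) p + A d) /\
  exists K : R, forall c : C, qhnorm (A c) <= K * qhnorm c.

Definition op_close (A B : C -> C) (e : R) : Prop :=
  forall c : C, qhnorm (A c - B c) <= e * qhnorm c.

Definition qpseries_partial (Phic : nat -> C -> C) (p : quat R) (n : nat) : C -> C :=
  fun c => \sum_(u < n) qh_lact (qpow p u) (Phic u c).

(** ell_{2,r}(N, C): sequences indexed from 1 (index 0 is ignored) *)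
Definition l2r_partial (r : R) (f : nat -> C) (n : nat) : R :=
  \sum_(1 <= u < n) r^-1 ^+ (2 * u) * qhnorm (f u) ^+ 2.
Definition l2r_mem (r : R) (f : nat -> C) : Prop := cvgn (l2r_partial r f).
Definition l2r_norm (r : R) (f : nat -> C) : R := Num.sqrt (limn (l2r_partial r f)).

Definition form_partial1 (Phic : nat -> C -> C) (f g : nat -> C) (n : nat) : quat R :=
  \sum_(1 <= v < n) \sum_(1 <= u < v.+1) qh_ip (Phic (v - u)%N (f v)) (g u).
Definition form_partial2 (Phis : nat -> C -> C) (f g : nat -> C) (n : nat) : quat R :=
  \sum_(1 <= u < n) \sum_(1 <= v < u.+1) qh_ip (Phis (u - v)%N (f v)) (g u).
Definition qform (Phic Phis : nat -> C -> C) (f g : nat -> C) : quat R :=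
  limn (form_partial1 Phic f g) + limn (form_partial2 Phis f g).
End QHilbertDefs.

(* Since Phi is the sum of its power series at the real point rho = (r + r0) / 2,
   consecutive partial sums there differ by rho^u Phi_u, which gives the Cauchy
   estimate ||Phi_u|| <= K rho^-u.  Every f in l_{2,r} satisfies ||f_v|| <= ||f|| r^v,
   so by Cauchy-Schwarz the (v, u) term of either double series (u <= v) is at most
   K ||f|| ||g|| (r / rho)^v r^u.  Both series thus converge absolutely, and
   [f, g]_Phi is a biadditive form bounded by a constant times ||f|| ||g||, hence
   jointly continuous. *)

From HB Require Import structures.
From mathcomp Require Import all_boot all_order all_algebra.
From mathcomp Require Import all_classical all_reals all_analysis.
From mathcomp Require Import ring lra.
Import Order.TTheory GRing.Theory Num.Theory.
Import numFieldNormedType.Exports.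
Local Open Scope ring_scope.
Set Implicit Arguments. Unset Strict Implicit. Unset Printing Implicit Defensive.

HB.instance Definition _ (R : realType) :=
  Uniform_isComplete.Build (quat R) (@mx_complete R 1 4).

Section Quaternion.
Variable R : realType.
Implicit Types (p q : quat R) (a b c d : R).

Lemma qcE0 a b c d : qc (mkq a b c d) 0 = a.
Proof. by rewrite /qc /mkq mxE inordK. Qed.
Lemma qcE1 a b c d : qc (mkq a b c d) 1 = b.
Proof. by rewrite /qc /mkq mxE inordK. Qed.
Lemma qcE2 a b c d : qc (mkq a b c d) 2 = c.
Proof. by rewrite /qc /mkq mxE inordK. Qed.
Lemma qcE3 a b c d : qc (mkq a b c d) 3 = d.
Proof. by rewrite /qc /mkq mxE inordK. Qed.
Definition qcE := (qcE0, qcE1, qcE2, qcE3).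

Lemma qcD p q k : qc (p + q) k = qc p k + qc q k.
Proof. by rewrite /qc mxE. Qed.
Lemma qcN p k : qc (- p) k = - qc p k.
Proof. by rewrite /qc mxE. Qed.
Lemma qc0 k : qc (0 : quat R) k = 0.
Proof. by rewrite /qc mxE. Qed.

Lemma quatP p q : (forall k, (k < 4)%N -> qc p k = qc q k) -> p = q.
Proof. by move=> H; apply/rowP => j; have := H j (ltn_ord j); rewrite /qc inord_val. Qed.

Lemma qconjD p q : qconj (p + q) = qconj p + qconj q.
Proof.
apply: quatP => k; rewrite qcD /qconj.
by case: k => [|[|[|[|]]]] //= _; rewrite !qcE !qcD; lra.
Qed.

Lemma qconjN p : qconj (- p) = - qconj p.
Proof.
apply: quatP => k; rewrite qcN /qconj.
by case: k => [|[|[|[|]]]] //= _; rewrite !qcE !qcN.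
Qed.

Lemma qconj0 : qconj 0 = 0 :> quat R.
Proof.
apply: quatP => k; rewrite qc0 /qconj.
by case: k => [|[|[|[|]]]] //= _; rewrite !qcE qc0 ?oppr0.
Qed.

Lemma qc0_qconj p : qc (qconj p) 0 = qc p 0.
Proof. by rewrite /qconj qcE. Qed.

Lemma qmul_qreal a b : qmul (qreal a) (qreal b) = qreal (a * b) :> quat R.
Proof.
apply: quatP => k; rewrite /qmul /qreal.
by case: k => [|[|[|[|]]]] //= _; rewrite !qcE; ring.
Qed.

Lemma qpow_qreal a n : qpow (qreal a) n = qreal (a ^+ n) :> quat R.
Proof. by elim: n => [|n IH] /=; rewrite ?expr0 // IH qmul_qreal exprS. Qed.

Lemma qabs_qreal a : qabs (qreal a) = `|a|.
Proof. by rewrite /qabs /qreal !qcE expr0n /= !addr0 sqrtr_sqr. Qed.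

Lemma normr_qc_le p k : (k < 4)%N -> `|qc p k| <= `|p|.
Proof.
move=> hk; rewrite /qc [X in _ <= X]mx_normrE.
exact: (le_bigmax _ (fun ij : 'I_1 * 'I_4 => `|p ij.1 ij.2|) (ord0, inord k)).
Qed.

Lemma normr_le_qc p B : 0 <= B -> (forall k, (k < 4)%N -> `|qc p k| <= B) -> `|p| <= B.
Proof.
move=> B0 H; rewrite [X in X <= _]mx_normrE.
apply: bigmax_le => // -[i j] _ /=.
by have := H j (ltn_ord j); rewrite /qc inord_val (ord1 i).
Qed.

Lemma qabs_le_normr p : qabs p <= 2 * `|p|.
Proof.
have sqr_le k : (k < 4)%N -> qc p k ^+ 2 <= `|p| ^+ 2.
  by move=> hk; rewrite -real_normK ?num_real // lerXn2r ?nnegrE ?normr_qc_le.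
rewrite /qabs -[2 * _]ger0_norm ?mulr_ge0 // -sqrtr_sqr ler_sqrt ?sqr_ge0 //.
have := sqr_le 0%N isT; have := sqr_le 1%N isT; have := sqr_le 2%N isT.
have := sqr_le 3%N isT; rewrite exprMn; lra.
Qed.

Lemma normr_qconj p : `|qconj p| = `|p|.
Proof.
have qc_qconj k : (k < 4)%N -> `|qc (qconj p) k| = `|qc p k|.
  by case: k => [|[|[|[|]]]] // _; rewrite /qconj !qcE ?normrN.
apply/eqP; rewrite eq_le; apply/andP; split; apply: normr_le_qc => // k hk.
  by rewrite qc_qconj ?normr_qc_le.
by rewrite -qc_qconj ?normr_qc_le.
Qed.

End Quaternion.

Section InnerProduct.
Variables (R : realType) (C : qhilbert R).
Implicit Types (x y z : C) (t : R).
Local Notation ip := (@qh_ip R C).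
Local Notation ra := (@qh_ract R C).

Definition qhnorm2 x : R := qc (ip x x) 0.

Lemma ipC x y : ip x y = qconj (ip y x).
Proof. exact: qh_ip_herm. Qed.

Lemma ip0l y : ip 0 y = 0.
Proof. by apply: (@addrI _ (ip 0 y)); rewrite -qh_ipDl !addr0. Qed.

Lemma ipNl x y : ip (- x) y = - ip x y.
Proof. by apply/eqP; rewrite -addr_eq0 -qh_ipDl addNr ip0l. Qed.

Lemma ipBl x x' y : ip (x - x') y = ip x y - ip x' y.
Proof. by rewrite qh_ipDl ipNl. Qed.

Lemma ip0r x : ip x 0 = 0.
Proof. by rewrite ipC ip0l qconj0. Qed.

Lemma ipDr x y z : ip x (y + z) = ip x y + ip x z.
Proof. by rewrite ipC qh_ipDl qconjD -!ipC. Qed.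

Lemma ipNr x y : ip x (- y) = - ip x y.
Proof. by rewrite ipC ipNl qconjN -ipC. Qed.

Lemma ipBr x y z : ip x (y - z) = ip x y - ip x z.
Proof. by rewrite ipDr ipNr. Qed.

Lemma qhnorm2_ge0 x : 0 <= qhnorm2 x.
Proof.
have [->|/qh_ip_pos/ltW//] := eqVneq x 0.
by rewrite /qhnorm2 ip0l qc0.
Qed.

Lemma qhnorm2_eq0 x : qhnorm2 x = 0 -> x = 0.
Proof. by move=> h; case: (eqVneq x 0) => // /qh_ip_pos; rewrite -/(qhnorm2 x) h ltxx. Qed.

Lemma qhnorm_ge0 x : 0 <= qhnorm x.
Proof. exact: sqrtr_ge0. Qed.

Lemma qhnorm_sqr x : qhnorm x ^+ 2 = qhnorm2 x.
Proof. by rewrite /qhnorm sqr_sqrtr // qhnorm2_ge0. Qed.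

Lemma qhnorm2D x y : qhnorm2 (x + y) = qhnorm2 x + qhnorm2 y + 2 * qc (ip x y) 0.
Proof. by rewrite /qhnorm2 qh_ipDl !ipDr !qcD (ipC y x) qc0_qconj; lra. Qed.

Lemma qhnormN x : qhnorm (- x) = qhnorm x.
Proof. by rewrite /qhnorm ipNl ipNr opprK. Qed.

Lemma qc0_ipZl x y t : qc (ip (ra x (qreal t)) y) 0 = t * qc (ip x y) 0.
Proof. by rewrite qh_ipZl /qmul /qreal !qcE; ring. Qed.

Lemma qhnorm2Z x t : qhnorm2 (ra x (qreal t)) = t ^+ 2 * qhnorm2 x.
Proof. by rewrite /qhnorm2 qc0_ipZl ipC qc0_qconj qc0_ipZl; ring. Qed.

Lemma qhnormZ x t : qhnorm (ra x (qreal t)) = `|t| * qhnorm x.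
Proof. by rewrite /qhnorm -!/(qhnorm2 _) qhnorm2Z sqrtrM ?sqr_ge0 // sqrtr_sqr. Qed.

Lemma ip_injr z z' : (forall x, ip x z = ip x z') -> z = z'.
Proof.
move=> eq_ip; apply/eqP; rewrite -subr_eq0; apply/eqP/qhnorm2_eq0.
by rewrite /qhnorm2 ipBr eq_ip subrr qc0.
Qed.

(* Real part of Cauchy-Schwarz: 0 <= ||t x +- y||^2 with t = ||y|| / ||x||. *)
Lemma normr_qc0_ip_le x y : `|qc (ip x y) 0| <= qhnorm x * qhnorm y.
Proof.
have [->|nx] := eqVneq x 0; first by rewrite ip0l qc0 normr0 mulr_ge0 ?qhnorm_ge0.
have [->|ny] := eqVneq y 0; first by rewrite ip0r qc0 normr0 mulr_ge0 ?qhnorm_ge0.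
have qhnorm_gt0 (w : C) : w != 0 -> 0 < qhnorm w by move=> /qh_ip_pos; rewrite sqrtr_gt0.
have a0 := qhnorm_gt0 _ nx; have b0 := qhnorm_gt0 _ ny.
set a := qhnorm x in a0 *; set b := qhnorm y in b0 *; set c := qc (ip x y) 0.
set t := b / a; have t0 : 0 < t by rewrite divr_gt0.
have ta : t * a = b by rewrite /t divfK // gt_eqF.
have H1 := qhnorm2_ge0 (ra x (qreal t) + y).
have H2 := qhnorm2_ge0 (ra x (qreal t) + - y).
rewrite qhnorm2D qhnorm2Z qc0_ipZl -!qhnorm_sqr -/a -/b -/c in H1.
rewrite qhnorm2D qhnorm2Z qc0_ipZl ipNr qcN -!qhnorm_sqr qhnormN -/a -/b -/c in H2.
have e1 : t ^+ 2 * a ^+ 2 + b ^+ 2 + 2 * (t * c) = 2 * t * (a * b + c) by rewrite -ta; ring.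
have e2 : t ^+ 2 * a ^+ 2 + b ^+ 2 + 2 * (t * - c) = 2 * t * (a * b - c) by rewrite -ta; ring.
rewrite e1 pmulr_rge0 ?mulr_gt0 ?invr_gt0 // in H1.
rewrite e2 pmulr_rge0 ?mulr_gt0 ?invr_gt0 // in H2.
by rewrite ler_norml; apply/andP; split; lra.
Qed.

Definition qunit (k : nat) : quat R :=
  match k with 1 => mkq 0 1 0 0 | 2 => mkq 0 0 1 0 | _ => mkq 0 0 0 1 end.

Lemma qc0_ip_qunit x y k : (0 < k < 4)%N -> qc (ip (ra x (qunit k)) y) 0 = - qc (ip x y) k.
Proof. by rewrite qh_ipZl; case: k => [|[|[|[|]]]] // _; rewrite /qmul /qunit !qcE; ring. Qed.

Lemma qhnorm_qunit x k : (0 < k < 4)%N -> qhnorm (ra x (qunit k)) = qhnorm x.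
Proof.
move=> hk; rewrite /qhnorm qh_ipZl ipC qh_ipZl qh_ip_real.
by case: k hk => [|[|[|[|]]]] // _; rewrite /qmul /qconj /qreal /qunit !qcE; congr Num.sqrt; ring.
Qed.

(* The other components reduce to the real part after right multiplication by i, j or k. *)
Lemma normr_ip_le x y : `|ip x y| <= qhnorm x * qhnorm y.
Proof.
apply: normr_le_qc => [|[_|k hk]]; first by rewrite mulr_ge0 ?qhnorm_ge0.
  exact: normr_qc0_ip_le.
rewrite -normrN -qc0_ip_qunit // -(qhnorm_qunit x (k := k.+1)) //.
exact: normr_qc0_ip_le.
Qed.

Lemma qhnormD_le x y : qhnorm (x + y) <= qhnorm x + qhnorm y.
Proof.
rewrite -(@ler_pXn2r _ 2) ?nnegrE ?addr_ge0 ?qhnorm_ge0 //.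
rewrite qhnorm_sqr qhnorm2D -!qhnorm_sqr.
have := normr_qc0_ip_le x y; rewrite ler_norml => /andP[_ h].
nra.
Qed.

Lemma qhnormB_le x y : qhnorm (x - y) <= qhnorm x + qhnorm y.
Proof. by rewrite -(qhnormN y) qhnormD_le. Qed.

End InnerProduct.

Section WeightedL2.
Variables (R : realType) (C : qhilbert R) (r : R).
Implicit Types f g : nat -> C.

Lemma l2r_term_ge0 f u : 0 <= r^-1 ^+ (2 * u) * qhnorm (f u) ^+ 2.
Proof. by rewrite mulr_ge0 ?sqr_ge0 // exprM exprn_ge0 ?sqr_ge0. Qed.

Lemma l2r_partial_nondecreasing f : {homo l2r_partial r f : n m / (n <= m)%N >-> n <= m}.
Proof. by apply: nondecreasing_series => n _ _; exact: l2r_term_ge0. Qed.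

Lemma l2r_partial_le_lim n f : l2r_mem r f -> l2r_partial r f n <= limn (l2r_partial r f).
Proof. by move=> hf; exact: nondecreasing_cvgn_le (l2r_partial_nondecreasing f) hf n. Qed.

Lemma l2r_norm_ge0 f : 0 <= l2r_norm r f.
Proof. exact: sqrtr_ge0. Qed.

Lemma qhnorm_le_l2r_norm f v : 0 < r -> l2r_mem r f -> (1 <= v)%N ->
  qhnorm (f v) <= l2r_norm r f * r ^+ v.
Proof.
move=> r0 hf v1; set L := limn (l2r_partial r f).
have term_le : r^-1 ^+ (2 * v) * qhnorm (f v) ^+ 2 <= L.
  apply: le_trans (l2r_partial_le_lim v.+1 hf).
  rewrite /l2r_partial big_nat_recr //= lerDr.
  by apply: sumr_ge0 => u _; exact: l2r_term_ge0.
have rv0 : 0 <= r ^+ v by rewrite exprn_ge0 ?ltW.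
rewrite -(@ler_pXn2r _ 2) ?nnegrE ?mulr_ge0 ?qhnorm_ge0 ?l2r_norm_ge0 //.
rewrite exprMn [l2r_norm r f ^+ 2]sqr_sqrtr; last exact: le_trans (l2r_term_ge0 f v) term_le.
rewrite -exprM mulnC -[X in X <= _](mulVKf (expf_neq0 (2 * v) (lt0r_neq0 r0))) -exprVn.
by rewrite mulrC ler_wpM2r // exprn_ge0 ?ltW.
Qed.

Lemma l2r_memB f f' : l2r_mem r f -> l2r_mem r f' -> l2r_mem r (f \- f').
Proof.
move=> hf hf'; apply: nondecreasing_is_cvgn; first exact: l2r_partial_nondecreasing.
exists (2 * limn (l2r_partial r f) + 2 * limn (l2r_partial r f')) => _ [n _ <-].
apply: (@le_trans _ _ (2 * l2r_partial r f n + 2 * l2r_partial r f' n)).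
  rewrite /l2r_partial !mulr_sumr -big_split /= !big_nat; apply: ler_sum => u _.
  set w := r^-1 ^+ (2 * u); have w0 : 0 <= w by rewrite /w exprM exprn_ge0 ?sqr_ge0.
  have -> : 2 * (w * qhnorm (f u) ^+ 2) + 2 * (w * qhnorm (f' u) ^+ 2)
          = w * (2 * qhnorm (f u) ^+ 2 + 2 * qhnorm (f' u) ^+ 2) by ring.
  apply: ler_wpM2l => //=.
  apply: (@le_trans _ _ ((qhnorm (f u) + qhnorm (f' u)) ^+ 2)).
    by rewrite lerXn2r ?nnegrE ?addr_ge0 ?qhnorm_ge0 ?qhnormB_le.
  rewrite sqrrD; have := sqr_ge0 (qhnorm (f u) - qhnorm (f' u)); rewrite sqrrB; lra.
by apply: lerD; rewrite ler_pM2l // l2r_partial_le_lim.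
Qed.

End WeightedL2.

Section CauchyEstimate.
Variables (R : realType) (C : qhilbert R).

Lemma qop_morphB (A : C -> C) : is_qop A -> {morph A : x y / x - y}.
Proof.
move=> [hA _]; have hD (x y : C) : A (x + y) = A x + A y.
  by have := hA x y (qone R); rewrite !qh_ract1.
by move=> x y; apply/eqP; rewrite eq_sym subr_eq -hD subrK.
Qed.

Lemma qpseries_partial_qrealS (Phic : nat -> C -> C) (rho : R) n c :
  qpseries_partial Phic (qreal rho) n.+1 c - qpseries_partial Phic (qreal rho) n c
  = qh_ract (Phic n c) (qreal (rho ^+ n)).
Proof.
by rewrite /qpseries_partial big_ord_recr /= addrAC subrr add0r qpow_qreal qh_real_central.
Qed.

Lemma qpseries_coef_le (Phic : nat -> C -> C) (P : C -> C) (rho : R) :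
  (forall k, is_qop (Phic k)) -> 0 < rho -> rho <= 1 ->
  (forall e, 0 < e -> exists N, forall n, (N <= n)%N ->
      op_close (qpseries_partial Phic (qreal rho) n) P e) ->
  exists2 K, 0 <= K & forall k c, qhnorm (Phic k c) <= K * rho^-1 ^+ k * qhnorm c.
Proof.
move=> hPhic rho0 rho1 hexp.
have [N closeN] := hexp 1 ltr01.
have [Kf hKf] := choice (fun k => proj2 (hPhic k)).
set S := qpseries_partial Phic (qreal rho).
set M := \big[Order.max/0]_(j < N) `|Kf j|.
have M0 : 0 <= M by apply/bigmax_geP; left.
have head k c : (k < N)%N -> qhnorm (Phic k c) <= M * qhnorm c.
  move=> kN; apply: le_trans (hKf k c) _; apply: ler_wpM2r; first exact: qhnorm_ge0.
  by apply: le_trans (ler_norm _) _; apply/bigmax_geP; right; exists (Ordinal kN).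
have tail k c : (N <= k)%N -> rho ^+ k * qhnorm (Phic k c) <= 2 * qhnorm c.
  move=> Nk; have rhok0 : 0 <= rho ^+ k by rewrite exprn_ge0 // ltW.
  rewrite -[rho ^+ k]ger0_norm // -qhnormZ -qpseries_partial_qrealS.
  have -> : S k.+1 c - S k c = (S k.+1 c - P c) - (S k c - P c).
    by rewrite opprB addrA subrK.
  apply: le_trans (qhnormB_le _ _) _; rewrite mulr_natl mulr2n.
  by apply: lerD; rewrite -[qhnorm c]mul1r; [apply: closeN; rewrite leqW | exact: closeN].
exists (2 + M) => [|k c]; first by rewrite addr_ge0.
have rhok : 1 <= rho^-1 ^+ k by rewrite exprn_ege1 // invf_ge1.
have rhok0 : 0 <= rho^-1 ^+ k by apply: le_trans rhok.
have c0 := qhnorm_ge0 c.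
case: (ltnP k N) => [/(head _ c)|/(tail _ c)] hk.
  apply: (le_trans hk); apply: ler_wpM2r => //.
  by apply: le_trans (ler_peMr _ rhok); rewrite ?addr_ge0 // lerDr.
rewrite -[qhnorm (Phic k c)](mulKf (expf_neq0 k (lt0r_neq0 rho0))) -exprVn.
apply: le_trans (ler_wpM2l rhok0 hk) _.
rewrite mulrA (mulrC _ 2); apply: ler_wpM2r => //; apply: ler_wpM2r => //.
by rewrite lerDl.
Qed.

End CauchyEstimate.

Section TriangularSeries.
Variables (R : realType) (V : completeNormedModType R).

Definition tri_partial (T : nat -> nat -> V) (n : nat) : V :=
  \sum_(1 <= v < n) \sum_(1 <= u < v.+1) T v u.

Lemma series1_geometric_cvg_le (h : nat -> V) (A q : R) : 0 <= A -> 0 < q -> q < 1 ->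
  (forall v, (1 <= v)%N -> `|h v| <= A * q ^+ v) ->
  cvgn (fun n => \sum_(1 <= v < n) h v) /\
  `|limn (fun n => \sum_(1 <= v < n) h v)| <= A / (1 - q).
Proof.
move=> A0 q0 q1 h_le.
pose h0 v := if v is 0 then 0 else h v.
have -> : (fun n => \sum_(1 <= v < n) h v) = series h0.
  apply/funext => -[|n]; rewrite /series /=; first by rewrite !big_geq.
  by rewrite [RHS]big_ltn // add0r; apply: eq_big_nat => -[|i].
have h0_le v : `|h0 v| <= geometric A q v.
  by case: v => [|v]; [rewrite normr0 /geometric /= expr0 mulr1 | exact: h_le].
have q_lt1 : `|q| < 1 by rewrite gtr0_norm.
have abs_cvg : cvgn [normed series h0].
  apply: (series_le_cvg _ _ h0_le) => [//|n|]; first by rewrite geometric_ge0 // ltW.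
  exact: is_cvg_geometric_series.
split; first exact: normed_cvg.
apply: le_trans (lim_series_norm abs_cvg) _.
rewrite -(cvg_lim _ (@cvg_geometric_series _ A _ q_lt1)) //.
by apply: lim_series_le => //; exact: is_cvg_geometric_series.
Qed.

Lemma geometric_partial1_le (r : R) v : 0 < r -> r < 1 ->
  \sum_(1 <= u < v.+1) r ^+ u <= r / (1 - r).
Proof.
move=> r0 r1; rewrite -add1n geometric_partial_tail expr1.
by apply: geometric_le_lim => //; [exact: ltW | rewrite gtr0_norm].
Qed.

Lemma tri_partial_cvg_le (T : nat -> nat -> V) (A q r : R) :
  0 <= A -> 0 < q -> q < 1 -> 0 < r -> r < 1 ->
  (forall v u, (1 <= u)%N -> (u <= v)%N -> `|T v u| <= A * q ^+ v * r ^+ u) ->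
  cvgn (tri_partial T) /\ `|limn (tri_partial T)| <= A * (r / (1 - r)) / (1 - q).
Proof.
move=> A0 q0 q1 r0 r1 T_le.
apply: series1_geometric_cvg_le => // [|v _].
  by rewrite mulr_ge0 // divr_ge0 ?ltW // subr_gt0.
apply: le_trans (ler_norm_sum _ _ _) _.
apply: (@le_trans _ _ (\sum_(1 <= u < v.+1) A * q ^+ v * r ^+ u)).
  by rewrite !big_nat; apply: ler_sum => u /andP[u1 uv]; exact: T_le.
rewrite -big_distrr /= mulrAC; apply: ler_wpM2r; first by rewrite exprn_ge0 // ltW.
by apply: ler_wpM2l => //; exact: geometric_partial1_le.
Qed.

End TriangularSeries.

Lemma bounded_biadditive_continuous (R : realType) (V : zmodType) (W : normedZmodType R)
    (P : V -> Prop) (N : V -> R) (B : V -> V -> W) (L : R) :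
  (forall f g, P f -> P g -> P (f - g)) -> (forall f, 0 <= N f) -> 0 <= L ->
  (forall f g, P f -> P g -> `|B f g| <= L * N f * N g) ->
  (forall f f' g, P f -> P f' -> P g -> B (f - f') g = B f g - B f' g) ->
  (forall f g g', P f -> P g -> P g' -> B f (g - g') = B f g - B f g') ->
  forall f0 g0, P f0 -> P g0 -> forall e, 0 < e -> exists d, 0 < d /\
    forall f g, P f -> P g -> N (f - f0) < d -> N (g - g0) < d -> `|B f g - B f0 g0| < e.
Proof.
move=> PB N0 L0 B_le Bl Br f0 g0 Pf0 Pg0 e e0.
set M := L * (1 + N f0 + N g0) + 1.
have M0 : 0 < M by rewrite ltr_pwDr // mulr_ge0 // !addr_ge0.
exists (Num.min 1 (e / M)); split=> [|f g Pf Pg]; first by rewrite lt_min ltr01 divr_gt0.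
have Pf' := PB _ _ Pf Pf0; have Pg' := PB _ _ Pg Pg0.
set a := N (f - f0); set b := N (g - g0); rewrite !lt_min => /andP[a1 ae] /andP[b1 be].
have -> : B f g - B f0 g0 = B (f - f0) (g - g0) + B (f - f0) g0 + B f0 (g - g0).
  by rewrite Br ?Bl // subrK Br // addrA subrK.
set X := B (f - f0) (g - g0); set Y := B (f - f0) g0; set Z := B f0 (g - g0).
have normXYZ : `|X + Y + Z| <= `|X| + `|Y| + `|Z|.
  by apply: le_trans (ler_normD _ _) _; rewrite lerD2r ler_normD.
apply: le_lt_trans normXYZ _.
have a0 := N0 (f - f0); have b0 := N0 (g - g0); have Nf0 := N0 f0; have Ng0 := N0 g0.
set d := e / M in ae be; have dM : d * M = e by rewrite divfK ?lt0r_neq0.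
have X_le : `|X| <= L * d.
  apply: le_trans (B_le _ _ Pf' Pg') _; rewrite -mulrA; apply: ler_wpM2l => //.
  by rewrite -[d]mulr1; apply: ler_pM => //; exact: ltW.
have Y_le : `|Y| <= L * d * N g0.
  apply: le_trans (B_le _ _ Pf' Pg0) _.
  by apply: ler_wpM2r => //; apply: ler_wpM2l => //; exact: ltW.
have Z_le : `|Z| <= L * N f0 * d.
  apply: le_trans (B_le _ _ Pf0 Pg') _.
  by apply: ler_wpM2l; [exact: mulr_ge0 | exact: ltW].
have d0 : 0 < d by rewrite divr_gt0.
suff : L * d + L * d * N g0 + L * N f0 * d < e by lra.
by rewrite -dM /M; nra.
Qed.

Section BoundedForm.
Variables (R : realType) (C : qhilbert R) (Phic Phis : nat -> C -> C) (r rho K : R).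
Hypotheses (r_gt0 : 0 < r) (r_lt_rho : r < rho) (rho_lt1 : rho < 1) (K_ge0 : 0 <= K).
Hypothesis Phic_le : forall k c, qhnorm (Phic k c) <= K * rho^-1 ^+ k * qhnorm c.
Hypothesis Phic_morphB : forall k, {morph Phic k : x y / x - y}.
Hypothesis Phis_adj : forall k c d, qh_ip (Phic k c) d = qh_ip c (Phis k d).
Implicit Types f g : nat -> C.

Let L := K * (r / (1 - r)) / (1 - r / rho).

Let rho_gt0 : 0 < rho. Proof. exact: lt_trans r_lt_rho. Qed.
Let r_lt1 : r < 1. Proof. exact: lt_trans rho_lt1. Qed.
Let q_gt0 : 0 < r / rho. Proof. exact: divr_gt0. Qed.
Let q_lt1 : r / rho < 1. Proof. by rewrite ltr_pdivrMr // mul1r. Qed.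

Lemma form_bound_ge0 : 0 <= L.
Proof. by rewrite /L !mulr_ge0 ?divr_ge0 ?invr_ge0 ?subr_ge0 // ltW. Qed.

Lemma Phic_term_le f g v u : l2r_mem r f -> l2r_mem r g -> (1 <= u)%N -> (u <= v)%N ->
  qhnorm (Phic (v - u) (f v)) * qhnorm (g u)
    <= K * l2r_norm r f * l2r_norm r g * (r / rho) ^+ v * r ^+ u.
Proof.
move=> hf hg u1 uv.
have rho_inv1 : 1 <= rho^-1 by rewrite invf_ge1 // ltW.
have fv := qhnorm_le_l2r_norm r_gt0 hf (leq_trans u1 uv).
have gu := qhnorm_le_l2r_norm r_gt0 hg u1.
apply: (@le_trans _ _ ((K * rho^-1 ^+ v * (l2r_norm r f * r ^+ v)) * (l2r_norm r g * r ^+ u))).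
  apply: ler_pM; rewrite ?qhnorm_ge0 //; apply: le_trans (Phic_le _ _) _.
  apply: ler_pM; rewrite ?mulr_ge0 ?exprn_ge0 ?invr_ge0 ?qhnorm_ge0 ?(ltW rho_gt0) //.
  by apply: ler_wpM2l => //; exact: ler_weXn2l (leq_subr u v).
by rewrite exprMn exprVn; lra.
Qed.

Lemma tri_partial_Phic_cvg_le f g (T : nat -> nat -> quat R) :
  l2r_mem r f -> l2r_mem r g ->
  (forall v u, `|T v u| <= qhnorm (Phic (v - u) (f v)) * qhnorm (g u)) ->
  cvgn (tri_partial T) /\ `|limn (tri_partial T)| <= L * l2r_norm r f * l2r_norm r g.
Proof.
move=> hf hg T_le.
have A0 : 0 <= K * l2r_norm r f * l2r_norm r g by rewrite !mulr_ge0 ?l2r_norm_ge0.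
have T_geo v u : (1 <= u)%N -> (u <= v)%N ->
    `|T v u| <= K * l2r_norm r f * l2r_norm r g * (r / rho) ^+ v * r ^+ u.
  by move=> u1 uv; apply: le_trans (T_le v u) _; exact: Phic_term_le.
have [cvgT limT] := tri_partial_cvg_le A0 q_gt0 q_lt1 r_gt0 r_lt1 T_geo.
by split=> //; move: limT; rewrite /L; lra.
Qed.

Lemma form_partial1_cvg_le f g : l2r_mem r f -> l2r_mem r g ->
  cvgn (form_partial1 Phic f g) /\
  `|limn (form_partial1 Phic f g)| <= L * l2r_norm r f * l2r_norm r g.
Proof.
move=> hf hg.
apply: (tri_partial_Phic_cvg_le (T := fun v u => qh_ip (Phic (v - u) (f v)) (g u))) => // v u.
exact: normr_ip_le.
Qed.

Lemma form_partial2_cvg_le f g : l2r_mem r f -> l2r_mem r g ->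
  cvgn (form_partial2 Phis f g) /\
  `|limn (form_partial2 Phis f g)| <= L * l2r_norm r f * l2r_norm r g.
Proof.
move=> hf hg; rewrite mulrAC.
apply: (tri_partial_Phic_cvg_le (T := fun v u => qh_ip (Phis (v - u) (f u)) (g v))) => // v u.
by rewrite ipC -Phis_adj normr_qconj normr_ip_le.
Qed.

Lemma Phis_morphB k : {morph Phis k : x y / x - y}.
Proof. by move=> x y; apply: ip_injr => z; rewrite ipBr -!Phis_adj ipBr. Qed.

Lemma form_partial1_subl f f' g :
  form_partial1 Phic (f \- f') g = form_partial1 Phic f g \- form_partial1 Phic f' g.
Proof.
apply/funext => n; rewrite /form_partial1 /= -sumrB; apply: eq_bigr => v _.
by rewrite -sumrB; apply: eq_bigr => u _; rewrite Phic_morphB ipBl.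
Qed.

Lemma form_partial1_subr f g g' :
  form_partial1 Phic f (g \- g') = form_partial1 Phic f g \- form_partial1 Phic f g'.
Proof.
apply/funext => n; rewrite /form_partial1 /= -sumrB; apply: eq_bigr => v _.
by rewrite -sumrB; apply: eq_bigr => u _; rewrite ipBr.
Qed.

Lemma form_partial2_subl f f' g :
  form_partial2 Phis (f \- f') g = form_partial2 Phis f g \- form_partial2 Phis f' g.
Proof.
apply/funext => n; rewrite /form_partial2 /= -sumrB; apply: eq_bigr => u _.
by rewrite -sumrB; apply: eq_bigr => v _; rewrite Phis_morphB ipBl.
Qed.

Lemma form_partial2_subr f g g' :
  form_partial2 Phis f (g \- g') = form_partial2 Phis f g \- form_partial2 Phis f g'.
Proof.
apply/funext => n; rewrite /form_partial2 /= -sumrB; apply: eq_bigr => u _.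
by rewrite -sumrB; apply: eq_bigr => v _; rewrite ipBr.
Qed.

Lemma qform_partials_cvg f g : l2r_mem r f -> l2r_mem r g ->
  cvgn (form_partial1 Phic f g) /\ cvgn (form_partial2 Phis f g).
Proof.
by move=> hf hg; split; [exact: (form_partial1_cvg_le hf hg).1 | exact: (form_partial2_cvg_le hf hg).1].
Qed.

Lemma qform_le f g : l2r_mem r f -> l2r_mem r g ->
  `|qform Phic Phis f g| <= 2 * L * l2r_norm r f * l2r_norm r g.
Proof.
move=> hf hg; apply: le_trans (ler_normD _ _) _.
have := (form_partial1_cvg_le hf hg).2; have := (form_partial2_cvg_le hf hg).2; lra.
Qed.

Lemma qform_subl f f' g : l2r_mem r f -> l2r_mem r f' -> l2r_mem r g ->
  qform Phic Phis (f \- f') g = qform Phic Phis f g - qform Phic Phis f' g.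
Proof.
move=> hf hf' hg.
have [cvg1 cvg2] := qform_partials_cvg hf hg; have [cvg1' cvg2'] := qform_partials_cvg hf' hg.
by rewrite /qform form_partial1_subl form_partial2_subl !limB // opprD addrACA.
Qed.

Lemma qform_subr f g g' : l2r_mem r f -> l2r_mem r g -> l2r_mem r g' ->
  qform Phic Phis f (g \- g') = qform Phic Phis f g - qform Phic Phis f g'.
Proof.
move=> hf hg hg'.
have [cvg1 cvg2] := qform_partials_cvg hf hg; have [cvg1' cvg2'] := qform_partials_cvg hf hg'.
by rewrite /qform form_partial1_subr form_partial2_subr !limB // opprD addrACA.
Qed.

Lemma qform_continuous f0 g0 : l2r_mem r f0 -> l2r_mem r g0 ->
  forall e, 0 < e -> exists d, 0 < d /\
    forall f g, l2r_mem r f -> l2r_mem r g ->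
      l2r_norm r (f \- f0) < d -> l2r_norm r (g \- g0) < d ->
      qabs (qform Phic Phis f g - qform Phic Phis f0 g0) < e.
Proof.
move=> hf0 hg0 e e0; have e2 : 0 < e / 2 by rewrite divr_gt0.
have [|d [d0 close]] := bounded_biadditive_continuous (@l2r_memB _ _ r) (@l2r_norm_ge0 _ _ r)
  _ qform_le qform_subl qform_subr hf0 hg0 e2.
  by rewrite mulr_ge0 // form_bound_ge0.
exists d; split=> // f g hf hg hfd hgd.
apply: le_lt_trans (qabs_le_normr _) _.
by rewrite -ltr_pdivlMl // mulrC; exact: close.
Qed.

End BoundedForm.

Unset Implicit Arguments.

Theorem proposition6p2 (R : realType) (C : qhilbert R)
  (hlip : forall (c d : C) (q : quat R),
     qh_ip c (qh_lact q d) = qh_ip (qh_lact (qconj q) c) d)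
  (r r0 : R) (hr : 0 < r) (hrr0 : r < r0) (hr01 : r0 < 1)
  (Phi : quat R -> C -> C) (Phic : nat -> C -> C) (Phis : nat -> C -> C)
  (hPhic : forall u, is_qop (Phic u))
  (hadj : forall (u : nat) (c d : C), qh_ip (Phic u c) d = qh_ip c (Phis u d))
  (hPhiL : forall p : quat R, qabs p <= r0 -> is_qop (Phi p))
  (hexp : forall p : quat R, qabs p < r0 ->
     forall e : R, 0 < e -> exists N : nat, forall n : nat, (N <= n)%N ->
       op_close (qpseries_partial Phic p n) (Phi p) e)
  (hcont : forall p : quat R, qabs p <= r0 ->
     forall e : R, 0 < e -> exists d : R, 0 < d /\
       forall p' : quat R, qabs p' <= r0 -> qabs (p' - p) < d ->
         op_close (Phi p') (Phi p) e) :
  (forall f g : nat -> C, l2r_mem r f -> l2r_mem r g ->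
     cvgn (form_partial1 Phic f g) /\ cvgn (form_partial2 Phis f g)) /\
  (forall f0 g0 : nat -> C, l2r_mem r f0 -> l2r_mem r g0 ->
     forall e : R, 0 < e -> exists d : R, 0 < d /\
       forall f g : nat -> C, l2r_mem r f -> l2r_mem r g ->
         l2r_norm r (fun u => f u - f0 u) < d ->
         l2r_norm r (fun u => g u - g0 u) < d ->
         qabs (qform Phic Phis f g - qform Phic Phis f0 g0) < e).
Proof.
pose rho := (r + r0) / 2.
have r_lt_rho : r < rho by rewrite /rho; lra.
have rho_lt1 : rho < 1 by rewrite /rho; lra.
have rho_gt0 : 0 < rho by lra.
have rho_in : qabs (qreal rho) < r0 by rewrite qabs_qreal gtr0_norm /rho //; lra.
have [K K0 PhicK] := qpseries_coef_le hPhic rho_gt0 (ltW rho_lt1) (hexp _ rho_in).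
have PhicB k := qop_morphB (hPhic k).
split=> [f g|f0 g0].
  exact: (qform_partials_cvg hr r_lt_rho rho_lt1 K0 PhicK hadj).
exact: (qform_continuous hr r_lt_rho rho_lt1 K0 PhicK PhicB hadj).
Qed.
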